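(* Let $(X,d)$ be a complete metric space and let $G:X\times X\to X$ be a mapping such that (a) $G(x,x)=x$ for all $x\in X$, and (b) for $x,y\in X$, $G(x,y)=x$ implies $y=x$. Let $T:X\to P_{cl}(X)$ be a multivalued operator with $SFix(T)\neq\emptyset$ and let $T_G(x)=\{G(x,u):u\in T(x)\}$ be the admissible perturbation of $T$ corresponding to $G$. Suppose there exist $\alpha,\beta,\gamma\ge0$ with $\alpha+\beta+\gamma<1$ such that $$H(T_G(x),T_G(y))\le\alpha d(x,y)+\beta D(x,T_G(y))+\gamma D(y,T_G(x))\quad\text{for all }x,y\in X,$$ so that $SFix(T)=\{x^*\}$ for some $x^*$, and suppose moreover that (ii) there exists $l\in(0,1)$ with $H(T(x),\{x^*\})\le l\,H(T_G(x),\{x^*\})$ for all $x\in X$, and (iii) there exists $L>0$ with $D(x,T_G(x))\le L\,D(x,T(x))$ for all $x\in X$. Then the strict fixed point problem $T(x)=\{x\}$ is well-posed: $T$ has a unique strict fixed point $x^*$, and for every sequence $(u_n)_{n\in\mathbb N}\subset X$ with $D(u_n,T(u_n))\to0$ we have $u_n\to x^*$.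
   Context: $P_{cl}(X)$ is the family of nonempty closed subsets of $X$; $SFix(T)=\{x:T(x)=\{x\}\}$. For nonempty $A,B\subseteq X$: $D(a,B)=\inf_{b\in B}d(a,b)$, $e(A,B)=\sup_{a\in A}D(a,B)$, $H(A,B)=\max\{e(A,B),e(B,A)\}$. *)

From HB Require Import structures.
From mathcomp Require Import all_boot all_order all_algebra.
From mathcomp Require Import all_classical all_reals all_analysis.
Set Implicit Arguments. Unset Strict Implicit. Unset Printing Implicit Defensive.
Import Order.TTheory GRing.Theory Num.Theory.
Import numFieldNormedType.Exports.
Local Open Scope classical_set_scope.
Local Open Scope ring_scope.

Section Defs.
Variables (R : realType) (X : Type) (d : X -> X -> R).

Definition is_metric : Prop :=
  (forall x y, 0 <= d x y) /\ (forall x y, d x y = 0 <-> x = y) /\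
  (forall x y, d x y = d y x) /\ (forall x y z, d x z <= d x y + d y z).

Definition mconverges (u : nat -> X) (x : X) : Prop :=
  (fun n => d (u n) x) @ \oo --> (0 : R).

Definition mcauchy (u : nat -> X) : Prop :=
  forall e : R, 0 < e -> exists N : nat, forall m n : nat,
    (N <= m)%N -> (N <= n)%N -> d (u m) (u n) < e.

Definition mcomplete : Prop :=
  forall u : nat -> X, mcauchy u -> exists x, mconverges u x.

Definition mclosed (A : set X) : Prop :=
  forall (u : nat -> X) (x : X), (forall n, A (u n)) -> mconverges u x -> A x.

Definition Pcl (A : set X) : Prop := A !=set0 /\ mclosed A.

Definition Dist (a : X) (B : set X) : \bar R :=
  ereal_inf [set (d a b)%:E | b in B].

Definition excess (A B : set X) : \bar R :=
  ereal_sup [set Dist a B | a in A].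

Definition Hpom (A B : set X) : \bar R := maxe (excess A B) (excess B A).

End Defs.

Definition SFix (X : Type) (T : X -> set X) : set X := [set x | T x = [set x]].

Definition TG (X : Type) (G : X -> X -> X) (T : X -> set X) (x : X) : set X :=
  [set G x u | u in T x].

From HB Require Import structures.
From mathcomp Require Import all_boot all_order all_algebra.
From mathcomp Require Import all_classical all_reals all_analysis.
From mathcomp Require Import lra.
Set Implicit Arguments. Unset Strict Implicit.
Import Order.TTheory GRing.Theory Num.Theory.
Import numFieldNormedType.Exports.
Local Open Scope classical_set_scope.
Local Open Scope ring_scope.

(* Since G(xs,xs) = xs, the strict fixed point xs of T is also one of T_G, so
   the Reich-type condition with y = xs controls H(T_G(x), {xs}); with (ii) and
   (iii) this gives the error bound
     (1 - l(alpha+beta+gamma)) d(x,xs) <= (1 + l gamma L) D(x,T(x)),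
   which forces u_n -> xs as soon as D(u_n,T(u_n)) -> 0.  The same condition at
   two strict fixed points of T_G gives uniqueness. *)

Section Distance.
Variables (R : realType) (X : Type) (d : X -> X -> R).

Lemma le_Dist a (B : set X) r :
  (forall b, B b -> r <= d a b) -> (r%:E <= Dist d a B)%E.
Proof. by move=> h; apply: le_ereal_inf_tmp => _ [b Bb <-]; rewrite lee_fin h. Qed.

Lemma Dist_le a (B : set X) b : B b -> (Dist d a B <= (d a b)%:E)%E.
Proof. by move=> Bb; apply: ereal_inf_lbound; exists b. Qed.

Lemma Dist_set1 a p : Dist d a [set p] = (d a p)%:E.
Proof. by rewrite /Dist image_set1 ereal_inf1. Qed.

Lemma le_Hpom_set1 (A : set X) p a : A a -> ((d a p)%:E <= Hpom d A [set p])%E.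
Proof.
move=> Aa; rewrite /Hpom le_max; apply/orP; left.
by apply: ereal_sup_ubound; exists a => //; rewrite Dist_set1.
Qed.

Hypothesis dm : is_metric d.

Lemma Dist_fin_num a (B : set X) : B !=set0 -> Dist d a B \is a fin_num.
Proof.
case=> b Bb; have Dist_ge0 : (0%:E <= Dist d a B)%E.
  by apply: le_Dist => c _; case: dm.
by rewrite ge0_fin_numE // (le_lt_trans (Dist_le a Bb)) ?ltry.
Qed.

Lemma fine_Dist_le a (B : set X) b : B b -> fine (Dist d a B) <= d a b.
Proof.
by move=> Bb; rewrite -lee_fin fineK ?Dist_le // Dist_fin_num //; exists b.
Qed.

Lemma le_fine_Dist a (B : set X) r : B !=set0 ->
  (forall b, B b -> r <= d a b) -> r <= fine (Dist d a B).
Proof. by move=> B0 h; rewrite -lee_fin fineK ?le_Dist ?Dist_fin_num. Qed.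

Lemma fine_Dist_triangle a c (B : set X) : B !=set0 ->
  fine (Dist d a B) <= d a c + fine (Dist d c B).
Proof.
move=> B0; rewrite -lerBlDl; apply: le_fine_Dist => // b Bb.
have [_ [_ [_ tri]]] := dm.
by rewrite lerBlDl (le_trans (fine_Dist_le a Bb)) // tri.
Qed.

Definition reich_condition (S : X -> set X) (alpha beta gamma : R) : Prop :=
  forall x y, (Hpom d (S x) (S y) <= (alpha * d x y)%:E
    + beta%:E * Dist d x (S y) + gamma%:E * Dist d y (S x))%E.

Lemma reich_SFix_unique (S : X -> set X) alpha beta gamma x y :
  alpha + beta + gamma < 1 -> reich_condition S alpha beta gamma ->
  SFix S x -> SFix S y -> x = y.
Proof.
move=> abc_lt1 SR Sx Sy; have [d_ge0 [d_eq0 [d_sym _]]] := dm.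
apply/d_eq0/eqP; rewrite eq_le d_ge0 andbT.
have := SR y x; rewrite (Sx : S x = _) (Sy : S y = _) !Dist_set1.
move=> /(le_trans (le_Hpom_set1 x (erefl y : [set y] y))).
rewrite -!EFinM -!EFinD lee_fin (d_sym x y).
have := d_ge0 y x; nra.
Qed.

Lemma mconverges_dominated (u : nat -> X) x (f : nat -> R) K :
  (forall n, d (u n) x <= K * f n) -> f @ \oo --> 0 -> mconverges d u x.
Proof.
have [d_ge0 _] := dm; move=> u_le f_cvg0.
apply: (@squeeze_cvgr _ _ _ _ (fun=> 0) (fun n => K * f n)).
- by apply: nearW => n; rewrite d_ge0 u_le.
- exact: cvg_cst.
- by rewrite -(mulr0 K); exact: cvgMl_tmp.
Qed.

End Distance.

Lemma SFix_TG (X : Type) (G : X -> X -> X) (T : X -> set X) x :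
  G x x = x -> SFix T x -> SFix (TG G T) x.
Proof.
move=> Gxx Tx; change (TG G T x = [set x]).
by rewrite /TG (Tx : T x = _) image_set1 Gxx.
Qed.

Section AdmissiblePerturbation.
Variables (R : realType) (X : Type) (d : X -> X -> R).
Variables (G : X -> X -> X) (T : X -> set X) (xs : X) (alpha beta gamma l L : R).
Hypotheses (dm : is_metric d) (G_diag : forall x, G x x = x).
Hypotheses (T_neq0 : forall x, T x !=set0) (xs_SFix : SFix T xs).
Hypothesis TG_reich : reich_condition d (TG G T) alpha beta gamma.
Hypotheses (gamma_ge0 : 0 <= gamma) (l_ge0 : 0 <= l).
Hypothesis T_Hpom :
  forall x, (Hpom d (T x) [set xs] <= l%:E * Hpom d (TG G T x) [set xs])%E.
Hypothesis TG_Dist : forall x, (Dist d x (TG G T x) <= L%:E * Dist d x (T x))%E.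

Let TG_neq0 x : TG G T x !=set0.
Proof. by have [t Tt] := T_neq0 x; exists (G x t), t. Qed.

Lemma Dist_SFix_TG_le x :
  fine (Dist d xs (TG G T x)) <= d x xs + L * fine (Dist d x (T x)).
Proof.
have [_ [_ [d_sym _]]] := dm; rewrite d_sym.
apply: le_trans (fine_Dist_triangle dm xs x (TG_neq0 x)) _.
by rewrite lerD2l -lee_fin EFinM !fineK ?Dist_fin_num.
Qed.

Lemma Hpom_TG_SFix_le x : (Hpom d (TG G T x) [set xs] <=
  ((alpha + beta) * d x xs + gamma * fine (Dist d xs (TG G T x)))%:E)%E.
Proof.
have := TG_reich x xs; rewrite (SFix_TG (G_diag xs) xs_SFix : TG G T xs = _).
rewrite Dist_set1 -(fineK (Dist_fin_num dm xs (TG_neq0 x))).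
by rewrite -!EFinM -!EFinD mulrDl.
Qed.

Lemma dist_T_SFix_le x t : T x t ->
  d t xs <= l * ((alpha + beta + gamma) * d x xs + gamma * L * fine (Dist d x (T x))).
Proof.
move=> Tt; rewrite -lee_fin.
apply: le_trans (le_Hpom_set1 d xs Tt) _; apply: le_trans (T_Hpom x) _.
rewrite EFinM lee_wpmul2l ?lee_fin //.
apply: le_trans (Hpom_TG_SFix_le x) _; rewrite lee_fin.
have := ler_wpM2l gamma_ge0 (Dist_SFix_TG_le x); nra.
Qed.

Lemma dist_SFix_le_Dist x : (1 - l * (alpha + beta + gamma)) * d x xs <=
  (1 + l * gamma * L) * fine (Dist d x (T x)).
Proof.
have [_ [_ [_ d_tri]]] := dm.
have : d x xs - l * ((alpha + beta + gamma) * d x xs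
    + gamma * L * fine (Dist d x (T x))) <= fine (Dist d x (T x)).
  apply: le_fine_Dist => // t Tt.
  by have := d_tri x t xs; have := dist_T_SFix_le Tt; lra.
nra.
Qed.

End AdmissiblePerturbation.

Theorem mainTheorem6 (R : realType) (X : Type) (d : X -> X -> R)
  (G : X -> X -> X) (T : X -> set X) (xs : X)
  (alpha beta gamma l L : R) :
  is_metric d -> mcomplete d ->
  (forall x, G x x = x) ->
  (forall x y, G x y = x -> y = x) ->
  (forall x, Pcl d (T x)) ->
  SFix T xs ->
  0 <= alpha -> 0 <= beta -> 0 <= gamma -> alpha + beta + gamma < 1 ->
  (forall x y, (Hpom d (TG G T x) (TG G T y)
     <= (alpha * d x y)%:E + beta%:E * Dist d x (TG G T y)
        + gamma%:E * Dist d y (TG G T x))%E) ->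
  0 < l -> l < 1 ->
  (forall x, (Hpom d (T x) [set xs] <= l%:E * Hpom d (TG G T x) [set xs])%E) ->
  0 < L ->
  (forall x, (Dist d x (TG G T x) <= L%:E * Dist d x (T x))%E) ->
  SFix T = [set xs] /\
  (forall u : nat -> X,
     (fun n => Dist d (u n) (T (u n))) @ \oo --> (0 : \bar R)%E ->
     mconverges d u xs).
Proof.
move=> dm _ G_diag _ T_Pcl xs_SFix alpha_ge0 beta_ge0 gamma_ge0 abc_lt1 TG_reich
  l_gt0 l_lt1 T_Hpom _ TG_Dist.
have T_neq0 x : T x !=set0 by case: (T_Pcl x).
split.
  apply/seteqP; split=> [y y_SFix|_ ->] //.
  exact: (reich_SFix_unique dm abc_lt1 TG_reich
    (SFix_TG (G_diag y) y_SFix) (SFix_TG (G_diag xs) xs_SFix)).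
move=> u /fine_cvgP[_ Dist_cvg0].
have contraction_gap_gt0 : 0 < 1 - l * (alpha + beta + gamma) by nra.
apply: (mconverges_dominated dm
  (K := (1 + l * gamma * L) / (1 - l * (alpha + beta + gamma))) _ Dist_cvg0) => n.
rewrite mulrAC ler_pdivlMr // mulrC.
exact: dist_SFix_le_Dist dm G_diag T_neq0 xs_SFix TG_reich gamma_ge0 (ltW l_gt0)
  T_Hpom TG_Dist (u n).
Qed.
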